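(* In the setting below, $\lambda_P(\mathrm{I}_{n-t}(\mathbf{J})) = \Delta^{n-t}\mathcal{O}$ as ideals of $\mathcal{O}$, where $\mathbf{J}$ is the Jacobian matrix of $f_1,\ldots,f_{n-t}$.
   Context: Let $\mathcal{O}$ be a discrete valuation ring with uniformiser $\varpi$. Let $2\le m\le n$, $t=m-1$, $P=\mathcal{O}[X_{m\times n}]$ (polynomial ring in the entries of an $m\times n$ matrix of indeterminates $X$), $X_{[a,b]}$ the submatrix of columns $a$ through $b$, and $f_k=\det X_{[k,k+t]}$ for $1\le k\le n-t$. The Jacobian $\mathbf{J}$ is the $mn\times(n-t)$ matrix over $P$ with rows indexed by the variables $X_{ij}$, columns indexed by $k$, and entries $\partial f_k/\partial X_{ij}$; $\mathrm{I}_{n-t}(\mathbf{J})$ is its ideal of $(n-t)\times(n-t)$ minors. Fix integers $0\le a_1\le\cdots\le a_t$, let $D=\operatorname{diag}(\varpi^{a_1},\ldots,\varpi^{a_t})$, $\Delta=\det D$. Let $\mathbf{a}\in\mathcal{O}^{m\times n}$ have zero last row and top $t$ entries of column $j$ equal to the $r$-th column of $D$, where $1\le r\le t$, $r\equiv j\pmod t$. Let $\lambda_P\colon P\to\mathcal{O}$ be the $\mathcal{O}$-algebra map $X_{ij}\mapsto\mathbf{a}_{ij}$. *)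

From HB Require Import structures.
From mathcomp Require Import all_boot all_order all_algebra.
From mathcomp Require Import mpoly.
Set Implicit Arguments. Unset Strict Implicit. Unset Printing Implicit Defensive.
Import Order.TTheory GRing.Theory.
Local Open Scope ring_scope.

Definition is_DVR_unif (O : idomainType) (w : O) : Prop :=
  [/\ w != 0, w \isn't a GRing.unit &
      forall x : O, x != 0 -> exists u k, u \is a GRing.unit /\ x = u * w ^+ k].

Definition ideal_gen (A : comNzRingType) (S : A -> Prop) : A -> Prop :=
  fun x => exists s : seq (A * A),
    (forall q, q \in s -> S q.2) /\ x = \sum_(q <- s) q.1 * q.2.

(* P = O[X_{m x n}]; the variable X_{ij} (0-based i < m, j < n) is the
   variable of index i*n + j in {mpoly O[m*n]}. Out of range entries are 0. *)
Definition Xvar (O : comNzRingType) (m n i j : nat) : {mpoly O[m * n]} :=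
  if ((i < m) && (j < n))%N then
    match (insub (i * n + j)%N : option 'I_(m * n)) with
    | Some v => 'X_v | None => 0 end
  else 0.

(* f_k = det X_[k, k+t] (0-based k < n - t, t = m - 1), columns k..k+m-1. *)
Definition fk (O : comNzRingType) (m n k : nat) : {mpoly O[m * n]} :=
  \det (\matrix_(i < m, j < m) Xvar O m n i (k + j)).

Definition jacobian (O : comNzRingType) (m n : nat)
  : 'M[{mpoly O[m * n]}]_(m * n, n - m.-1) :=
  \matrix_(v < m * n, k < n - m.-1) mderiv v (fk O m n k).

Definition jac_minor (O : comNzRingType) (m n : nat) (p : {mpoly O[m * n]}) : Prop :=
  exists f : 'I_(n - m.-1) -> 'I_(m * n),
    (forall i j : 'I_(n - m.-1), (i < j)%N -> (f i < f j)%N) /\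
    p = \det (rowsub f (jacobian O m n)).

(* The point a: entry (i, j) (0-based) is 0 in the last row i = t, and for
   i < t it is the (i, r) entry of D, where r - 1 = j mod t (0-based). *)
Definition apt (O : comNzRingType) (m n : nat) (w : O) (e : nat -> nat)
  (i j : nat) : O :=
  if ((i < m.-1) && (i == j %% m.-1))%N then w ^+ e i else 0.

Definition lambdaP (O : comNzRingType) (m n : nat) (w : O) (e : nat -> nat)
  (p : {mpoly O[m * n]}) : O :=
  p.@[fun v : 'I_(m * n) => apt m n w e (v %/ n) (v %% n)].

(* Only the last row of X_[k,k+t] vanishes at the point a, so there every
   cofactor off the last row is zero while the cofactors along the last row
   are +-Delta times the determinant of a 0/1 matrix.  Since
   d f_k / d X_ij is the (i, j-k) cofactor, every entry of lambda_P(J) lies in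
   Delta O, hence every (n-t)-minor lies in Delta^(n-t) O.  Conversely, the
   rows of J indexed by the last-row variables X_{m,1}, ..., X_{m,n-t} form a
   triangular minor whose diagonal entries are +-Delta times the determinant
   of a permutation matrix, so its image is Delta^(n-t) times a unit. *)

From HB Require Import structures.
From mathcomp Require Import all_boot all_order all_algebra.
From mathcomp Require Import perm mpoly zify.
Set Implicit Arguments. Unset Strict Implicit. Unset Printing Implicit Defensive.
Import GRing.Theory.
Local Open Scope ring_scope.

Section MDerivDet.
Variables (R : comNzRingType) (N : nat) (i : 'I_N).

Lemma mderivXU (j : 'I_N) : mderiv i ('X_j : {mpoly R[N]}) = (j == i)%:R.
Proof.
rewrite mderivX mnm1E; case: eqP => [->|_]; last by rewrite scale0r.
have -> : (U_(i) - U_(i) = 0)%MM by apply/mnmP=> q; rewrite !mnmE subnn.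
by rewrite scale1r mpolyX0.
Qed.

Lemma mderiv_sign k : mderiv i ((-1) ^+ k : {mpoly R[N]}) = 0.
Proof. by rewrite -(rmorph_sign (@mpolyC N R)) mderivC. Qed.

Lemma mderiv_prod_eq0 (I : Type) (r : seq I) (F : I -> {mpoly R[N]}) :
  (forall j, mderiv i (F j) = 0) -> mderiv i (\prod_(j <- r) F j) = 0.
Proof.
move=> dF; elim/big_rec: _ => [|j p _ dp]; first by rewrite -mpolyC1 mderivC.
by rewrite mderivM dF dp mul0r mulr0 addr0.
Qed.

Lemma mderiv_det_eq0 k (A : 'M[{mpoly R[N]}]_k) :
  (forall a b, mderiv i (A a b) = 0) -> mderiv i (\det A) = 0.
Proof.
move=> dA; rewrite /determinant raddf_sum /=; apply: big1 => s _.
by rewrite mderivM mderiv_sign mderiv_prod_eq0 // mul0r mulr0 addr0.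
Qed.

Lemma mderiv_det_row k (A : 'M[{mpoly R[N]}]_k) (r : 'I_k) :
  (forall a b, a != r -> mderiv i (A a b) = 0) ->
  mderiv i (\det A) = \sum_c mderiv i (A r c) * cofactor A r c.
Proof.
move=> dA; rewrite (expand_det_row _ r) raddf_sum /=; apply: eq_bigr => c _.
rewrite mderivM [mderiv i (cofactor _ _ _)]mderivM mderiv_sign mderiv_det_eq0.
  by rewrite mul0r mulr0 addr0 mulr0 addr0.
by move=> a b; rewrite !mxE dA // eq_sym neq_lift.
Qed.

End MDerivDet.

Section IdealGen.
Variables (A : comNzRingType) (S : A -> Prop).

Lemma ideal_gen_mul c g : S g -> ideal_gen S (c * g).
Proof.
by move=> Sg; exists [:: (c, g)]; split=> [q|]; rewrite ?inE ?big_seq1 // => /eqP ->.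
Qed.

Lemma rmorph_ideal_gen_dvd (B : comNzRingType) (f : {rmorphism A -> B}) d :
  (forall s, S s -> exists c, f s = d * c) ->
  forall x, ideal_gen S x -> exists c, f x = d * c.
Proof.
move=> dvd_S _ [s [sS ->]]; elim: s sS => [|q s IHs] sS.
  by exists 0; rewrite big_nil rmorph0 mulr0.
have [c1 Hc1] := IHs (fun q' sq' => sS q' (mem_behead (s := q :: s) sq')).
have [c2 Hc2] := dvd_S _ (sS q (mem_head q s)).
exists (f q.1 * c2 + c1).
by rewrite big_cons rmorphD rmorphM Hc1 Hc2 mulrDr mulrCA.
Qed.

End IdealGen.

Lemma cofactor_zero_row (R : comNzRingType) k (A : 'M[R]_k) (r0 r c : 'I_k) :
  (forall j, A r0 j = 0) -> r != r0 -> cofactor A r c = 0.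
Proof.
move=> A0 r0r; have [r' def_r0 _] := unlift_some r0r.
rewrite /cofactor (expand_det_row _ r') big1 ?mulr0 // => j _.
by rewrite !mxE -def_r0 A0 mul0r.
Qed.

Lemma det_dvd_entries (R : comNzRingType) k (A : 'M[R]_k) d :
  (forall i j, exists b, A i j = d * b) -> exists c, \det A = d ^+ k * c.
Proof.
move=> dA; have [b Hb] := fin_all_exists (fun ij : 'I_k * 'I_k => dA ij.1 ij.2).
exists (\det (\matrix_(i, j) b (i, j))); rewrite -detZ; congr (\det _).
by apply/matrixP => i j; rewrite !mxE (Hb (i, j)).
Qed.

(* Deleting the last row and column c of a_[k,k+t] leaves
   diag(w^(e 0), ..., w^(e (t-1))) *m residue_mx k c. *)
Definition residue_mx (R : nzRingType) t (k : nat) (c : 'I_t.+1) : 'M[R]_t :=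
  \matrix_(i, s) (val i == (k + lift c s) %% t)%N%:R.

Lemma residue_mx0_unit (R : comUnitRingType) t k :
  (0 < t)%N -> \det (residue_mx R k (ord0 : 'I_t.+1)) \is a GRing.unit.
Proof.
move=> t_gt0; pose f (s : 'I_t) := Ordinal (ltn_pmod (k + s.+1) t_gt0).
have f_inj : injective f.
  move=> s1 s2 /(congr1 val) /= /eqP; rewrite -!addSnnS eqn_modDl.
  by rewrite !modn_small // => /eqP /val_inj.
have -> : residue_mx R k ord0 = (perm_mx (perm f_inj))^T.
  by apply/matrixP => i s; rewrite !mxE permE eq_sym.
by rewrite det_tr det_perm unitrX // unitrN1.
Qed.

Section JacobianAtPoint.
Variables (O : comNzRingType) (t n : nat) (w : O) (e : nat -> nat).

Local Notation Delta := (\prod_(i < t) w ^+ e i).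

Definition apoint (v : 'I_(t.+1 * n)) : O := apt t.+1 n w e (v %/ n) (v %% n).

Definition slice (k : nat) : 'M[O]_t.+1 :=
  \matrix_(i, c) apt t.+1 n w e i (k + c).

Lemma var_index_lt i j : (i < t.+1)%N -> (j < n)%N -> (i * n + j < t.+1 * n)%N.
Proof. by move=> ? ?; nia. Qed.

Lemma XvarE i j (lt_i : (i < t.+1)%N) (lt_j : (j < n)%N) :
  Xvar O t.+1 n i j = 'X_(Ordinal (var_index_lt lt_i lt_j)).
Proof.
rewrite /Xvar lt_i lt_j /=.
case: insubP => [u _ val_u|]; last by rewrite var_index_lt.
by congr 'X_ _; apply: val_inj.
Qed.

Lemma mderiv_Xvar i j (v : 'I_(t.+1 * n)) : (i < t.+1)%N -> (j < n)%N ->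
  mderiv v (Xvar O t.+1 n i j) = (i * n + j == v)%N%:R.
Proof. by move=> lt_i lt_j; rewrite XvarE mderivXU. Qed.

Lemma meval_Xvar i j : (i < t.+1)%N -> (j < n)%N ->
  (Xvar O t.+1 n i j).@[apoint] = apt t.+1 n w e i j.
Proof.
move=> lt_i lt_j; rewrite XvarE mevalXU /apoint /=.
have n_gt0 : (0 < n)%N by apply: leq_ltn_trans lt_j.
by rewrite divnMDl // modnMDl divn_small // modn_small // addn0.
Qed.

Lemma var_row_lt (v : 'I_(t.+1 * n)) : (v %/ n < t.+1)%N.
Proof. by case: n v => [|n'] v; [case: v; rewrite muln0 | rewrite ltn_divLR]. Qed.

Definition var_row (v : 'I_(t.+1 * n)) : 'I_t.+1 := Ordinal (var_row_lt v).

Lemma slice_col_lt (k : 'I_(n - t)) (c : 'I_t.+1) : (k + c < n)%N.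
Proof. by have := ltn_ord k; have := ltn_ord c; lia. Qed.

Lemma meval_jacobian (v : 'I_(t.+1 * n)) (k : 'I_(n - t)) :
  (jacobian O t.+1 n v k).@[apoint] =
  \sum_(c < t.+1)
    ((v %/ n * n + (k + c))%N == v)%:R * cofactor (slice k) (var_row v) c.
Proof.
have n_gt0 : (0 < n)%N by have := slice_col_lt k ord0; lia.
rewrite mxE /fk (@mderiv_det_row _ _ _ _ _ (var_row v)) => [|a b a_v].
  rewrite rmorph_sum; apply: eq_bigr => c _.
  rewrite rmorphM mxE mderiv_Xvar ?slice_col_lt // rmorph_nat -cofactor_map_mx.
  congr (_ * cofactor _ _ _); apply/matrixP => a b; rewrite !mxE.
  exact: meval_Xvar (ltn_ord a) (slice_col_lt k b).
rewrite mxE mderiv_Xvar ?slice_col_lt //; case: eqP => // v_ab.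
case/eqP: a_v; apply: val_inj => /=.
by rewrite -v_ab divnMDl // divn_small ?addn0 // slice_col_lt.
Qed.

Lemma slice_last_row k c : slice k ord_max c = 0.
Proof. by rewrite mxE /apt ltnn. Qed.

Lemma cofactor_slice_last k c :
  cofactor (slice k) ord_max c =
  (-1) ^+ (t + c) * (Delta * \det (residue_mx O k c)).
Proof.
rewrite /cofactor /=; congr (_ * _).
have -> : row' ord_max (col' c (slice k)) =
          diag_mx (\row_(i < t) w ^+ e i) *m residue_mx O k c.
  apply/matrixP => i s; rewrite mul_diag_mx !mxE /apt /=.
  have -> : bump t i = i by rewrite /bump leqNgt ltn_ord.
  by rewrite ltn_ord; case: eqP; rewrite ?mulr1 ?mulr0.
by rewrite det_mulmx det_diag; congr (_ * _); apply: eq_bigr => i _; rewrite mxE.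
Qed.

Lemma meval_jacobian_dvd v k :
  exists b, (jacobian O t.+1 n v k).@[apoint] = Delta * b.
Proof.
have cof_dvd c : exists b, cofactor (slice k) (var_row v) c = Delta * b.
  have [->|vr_max] := eqVneq (var_row v) ord_max.
    by eexists; rewrite cofactor_slice_last mulrCA.
  by exists 0; rewrite (cofactor_zero_row _ (@slice_last_row k)) // mulr0.
have [b Hb] := fin_all_exists cof_dvd.
exists (\sum_(c < t.+1) ((v %/ n * n + (k + c))%N == v)%:R * b c).
by rewrite meval_jacobian big_distrr; apply: eq_bigr => c _; rewrite Hb mulrCA.
Qed.

Lemma meval_jac_minor_dvd p :
  jac_minor (O := O) (m := t.+1) (n := n) p ->
  exists c, p.@[apoint] = Delta ^+ (n - t) * c.
Proof.
move=> [f [_ ->]]; rewrite -det_map_mx; apply: det_dvd_entries => i j.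
by have := meval_jacobian_dvd (f i) j; rewrite !mxE.
Qed.

Lemma last_row_var_lt (j : 'I_(n - t)) : (t * n + j < t.+1 * n)%N.
Proof. by have := ltn_ord j; nia. Qed.

Definition last_row_var (j : 'I_(n - t)) : 'I_(t.+1 * n) :=
  Ordinal (last_row_var_lt j).

Lemma jac_minor_last_row :
  jac_minor (\det (rowsub last_row_var (jacobian O t.+1 n))).
Proof. by exists last_row_var; split => // i j /=; rewrite ltn_add2l. Qed.

Lemma meval_jacobian_last_row (j k : 'I_(n - t)) :
  (jacobian O t.+1 n (last_row_var j) k).@[apoint] =
  \sum_(c < t.+1) ((k + c)%N == j)%:R * cofactor (slice k) ord_max c.
Proof.
have n_gt0 : (0 < n)%N by have := ltn_ord j; lia.
have row_j : (last_row_var j %/ n = t)%N.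
  by rewrite /= divnMDl // divn_small ?addn0 //; have := ltn_ord j; lia.
rewrite meval_jacobian.
have -> : var_row (last_row_var j) = ord_max by apply: val_inj; rewrite /= row_j.
by apply: eq_bigr => c _; rewrite row_j /= eqn_add2l.
Qed.

Lemma meval_jac_minor_last_row :
  (\det (rowsub last_row_var (jacobian O t.+1 n))).@[apoint] =
  Delta ^+ (n - t) *
  \prod_(j < n - t) ((-1) ^+ t * \det (residue_mx O j (ord0 : 'I_t.+1))).
Proof.
rewrite -det_map_mx det_trig => [|]; last first.
  apply/is_trig_mxP => i j lt_ij; rewrite mxE [rowsub _ _ i j]mxE.
  apply: etrans (meval_jacobian_last_row i j) _; apply: big1 => c _.
  by rewrite (_ : (j + c == i)%N = false) ?mul0r //; apply/negbTE; lia.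
have -> : Delta ^+ (n - t) = \prod_(j < n - t) Delta by rewrite prodr_const card_ord.
rewrite -big_split /=; apply: eq_bigr => j _.
rewrite mxE [rowsub _ _ j j]mxE; apply: etrans (meval_jacobian_last_row j j) _.
rewrite (bigD1 ord0) //= big1 => [|c c_neq0]; last first.
  rewrite (_ : (j + c == j)%N = false) ?mul0r //.
  by apply/negbTE; move: c_neq0; rewrite -val_eqE /=; lia.
by rewrite addn0 eqxx mul1r addr0 cofactor_slice_last addn0 mulrCA.
Qed.

End JacobianAtPoint.

Unset Implicit Arguments.
Set Strict Implicit.

Theorem lemma5p6 (O : idomainType) (w : O) (m n : nat) (e : nat -> nat) :
  is_DVR_unif w -> (2 <= m)%N -> (m <= n)%N ->
  (forall i j, (i <= j)%N -> (j < m.-1)%N -> (e i <= e j)%N) ->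
  forall x : O,
    (exists p, ideal_gen (@jac_minor O m n) p /\ lambdaP w e p = x) <->
    (exists c : O, x = (\prod_(i < m.-1) w ^+ e i) ^+ (n - m.-1) * c).
Proof.
case: m => [//|t] _ t_gt0 _ _ x /=; split.
  move=> [p [Ip <-]]; apply: rmorph_ideal_gen_dvd Ip.
  exact: meval_jac_minor_dvd.
move=> [c ->].
pose u := \prod_(j < n - t) ((-1) ^+ t * \det (residue_mx O j (ord0 : 'I_t.+1))).
have u_unit : u \is a GRing.unit.
  by apply/unitr_prod => j _; rewrite unitrM unitrX ?unitrN1 ?residue_mx0_unit.
exists ((c / u)%:MP * \det (rowsub (@last_row_var t n) (jacobian O t.+1 n))).
split; first exact/ideal_gen_mul/jac_minor_last_row.
by rewrite /lambdaP rmorphM /= mevalC meval_jac_minor_last_row mulrCA divrK.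
Qed.
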